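(* Let $h:\mathbb{A}\to\mathbb{A}$ be a monotone continuous function. Then there is a clopen interval $J\subseteq\mathbb{A}$ such that either $h\restriction J$ is constant or $h\restriction J$ is strictly monotone.
   Context: Let $\mathbb{A}_0=\,]0,1]\times\{0\}$, $\mathbb{A}_1=[0,1[\,\times\{1\}$ and $\mathbb{A}=\mathbb{A}_0\cup\mathbb{A}_1$, ordered lexicographically: $\langle a,r\rangle\prec\langle b,s\rangle$ iff $a<b$, or $a=b$ and $r<s$; $\mathbb{A}$ (the double arrow space) carries the order topology. A clopen interval is a nonempty convex subset of $\mathbb{A}$ that is clopen. A (partial) function $f:\mathbb{A}\to\mathbb{A}$ is monotone if it is non-decreasing or non-increasing, and strictly monotone if it is strictly increasing or strictly decreasing. *)

(* the double arrow space as a subtype of R * bool. *)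
From Stdlib Require Import Reals.
Open Scope R_scope.

(* <a, false> stands for <a,0>, <a, true> for <a,1>. *)
Definition in_DA (p : R * bool) : Prop :=
  if snd p then 0 <= fst p < 1 else 0 < fst p <= 1.

Definition DA : Type := { p : R * bool | in_DA p }.

Definition DApt (x : DA) : R * bool := proj1_sig x.

Definition DAlt (x y : DA) : Prop :=
  fst (DApt x) < fst (DApt y) \/
  (fst (DApt x) = fst (DApt y) /\ snd (DApt x) = false /\ snd (DApt y) = true).

Definition DAle (x y : DA) : Prop := DAlt x y \/ x = y.

(* Open "interval" with optional endpoints (None = unbounded); these are the
   basic open sets of the order topology: open rays, open intervals, whole space. *)
Definition open_int (lo hi : option DA) (y : DA) : Prop :=
  match lo with Some a => DAlt a y | None => True end /\
  match hi with Some b => DAlt y b | None => True end.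

Definition DAopen (U : DA -> Prop) : Prop :=
  forall x, U x -> exists lo hi, open_int lo hi x /\
    (forall y, open_int lo hi y -> U y).

Definition DAclopen (U : DA -> Prop) : Prop :=
  DAopen U /\ DAopen (fun x => ~ U x).

Definition convex (J : DA -> Prop) : Prop :=
  forall x y z, J x -> J z -> DAle x y -> DAle y z -> J y.

Definition clopen_interval (J : DA -> Prop) : Prop :=
  (exists x, J x) /\ convex J /\ DAclopen J.

Definition DAcontinuous (h : DA -> DA) : Prop :=
  forall U, DAopen U -> DAopen (fun x => U (h x)).

Definition nondecreasing_on (J : DA -> Prop) (h : DA -> DA) : Prop :=
  forall x y, J x -> J y -> DAle x y -> DAle (h x) (h y).
Definition nonincreasing_on (J : DA -> Prop) (h : DA -> DA) : Prop :=
  forall x y, J x -> J y -> DAle x y -> DAle (h y) (h x).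
Definition strictly_increasing_on (J : DA -> Prop) (h : DA -> DA) : Prop :=
  forall x y, J x -> J y -> DAlt x y -> DAlt (h x) (h y).
Definition strictly_decreasing_on (J : DA -> Prop) (h : DA -> DA) : Prop :=
  forall x y, J x -> J y -> DAlt x y -> DAlt (h y) (h x).

Definition monotone_on J h := nondecreasing_on J h \/ nonincreasing_on J h.
Definition strictly_monotone_on J h :=
  strictly_increasing_on J h \/ strictly_decreasing_on J h.
Definition constant_on (J : DA -> Prop) (h : DA -> DA) : Prop :=
  forall x y, J x -> J y -> h x = h y.

(* The level sets of a monotone map are convex.  If h is injective it is
   strictly monotone on the whole space.  Otherwise h x = h y for some x < y.
   When x and y have different first coordinates, the level set contains a
   clopen block [<a,1>, <b,0>] lying between them.  Otherwise x = <t,0> and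
   y = <t,1>.  The value c = h x has a clopen half-line, [c, ->) or (<-, c],
   according to its second coordinate; its preimage is an open neighbourhood
   of x and y, and on one side of the pair monotonicity puts h in the
   opposite closed half-line, so h = c on a clopen block ending at x or
   starting at y. *)

From Stdlib Require Import Reals Lra ProofIrrelevance Classical.
Open Scope R_scope.

Lemma DApt_inj (x y : DA) :
  fst (DApt x) = fst (DApt y) -> snd (DApt x) = snd (DApt y) -> x = y.
Proof.
  destruct x as [[a r] Hx], y as [[b s] Hy]; unfold DApt; simpl; intros -> ->.
  f_equal; apply proof_irrelevance.
Qed.

Lemma DApt_bounds (x : DA) :
  0 <= fst (DApt x) <= 1 /\
  (snd (DApt x) = false -> 0 < fst (DApt x)) /\
  (snd (DApt x) = true -> fst (DApt x) < 1).
Proof.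
  destruct x as [[a [|]] H]; unfold DApt, in_DA in *; simpl in *;
    repeat split; intros; try discriminate; lra.
Qed.

Lemma DAle_iff (x y : DA) :
  DAle x y <-> fst (DApt x) < fst (DApt y) \/
    (fst (DApt x) = fst (DApt y) /\ (snd (DApt x) = false \/ snd (DApt y) = true)).
Proof.
  unfold DAle, DAlt; split.
  - intros [[H|[H1 [H2 H3]]]|<-]; auto.
    right; split; auto; destruct (snd (DApt x)); auto.
  - intros [H|[H1 H2]]; [left; left; exact H|].
    destruct (snd (DApt x)) eqn:E1, (snd (DApt y)) eqn:E2;
      try (right; apply DApt_inj; congruence).
    + destruct H2; discriminate.
    + left; right; auto.
Qed.

(* Decides order facts about the points in context: case analysis on their
   second coordinates, then real linear arithmetic. *)
Ltac da_order :=
  repeat match goal with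
    | x : DA |- _ =>
        lazymatch goal with
        | _ : 0 <= fst (DApt x) <= 1 /\ _ |- _ => fail
        | _ => pose proof (DApt_bounds x)
        end
    end;
  unfold DAlt in *; repeat rewrite DAle_iff in *; unfold DApt in *; simpl in *;
  repeat match goal with
    | |- context [snd (proj1_sig ?x)] => destruct (snd (proj1_sig x))
    | H : context [snd (proj1_sig ?x)] |- _ => destruct (snd (proj1_sig x))
    end; simpl in *;
  intuition (try discriminate; try lra).

Lemma DAle_refl (x : DA) : DAle x x.
Proof. right; reflexivity. Qed.

Lemma DAle_antisym (x y : DA) : DAle x y -> DAle y x -> x = y.
Proof. intros [Hxy|Hxy] [Hyx|Hyx]; auto; exfalso; da_order. Qed.

Lemma DAle_trans (x y z : DA) : DAle x y -> DAle y z -> DAle x z.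
Proof. intros; da_order. Qed.

Lemma DAle_total (x y : DA) : DAle x y \/ DAle y x.
Proof.
  destruct (total_order_T (fst (DApt x)) (fst (DApt y))) as [[H|H]|H]; da_order.
Qed.

Lemma DAnle_lt (x y : DA) : ~ DAle x y <-> DAlt y x.
Proof.
  split.
  - intros Hxy; destruct (DAle_total y x) as [[H|<-]|H];
      [exact H | destruct (Hxy (DAle_refl y)) | contradiction].
  - intros; da_order.
Qed.

Definition above (lo : option DA) (y : DA) : Prop :=
  match lo with Some a => DAlt a y | None => True end.

Definition below (hi : option DA) (y : DA) : Prop :=
  match hi with Some b => DAlt y b | None => True end.

Lemma above_meet (lo1 lo2 : option DA) :
  exists lo, forall y, above lo y <-> above lo1 y /\ above lo2 y.
Proof.
  destruct lo1 as [a|], lo2 as [b|]; simpl.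
  - destruct (DAle_total a b); [exists (Some b) | exists (Some a)];
      simpl; intros; da_order.
  - exists (Some a); simpl; tauto.
  - exists (Some b); simpl; tauto.
  - exists None; simpl; tauto.
Qed.

Lemma below_meet (hi1 hi2 : option DA) :
  exists hi, forall y, below hi y <-> below hi1 y /\ below hi2 y.
Proof.
  destruct hi1 as [a|], hi2 as [b|]; simpl.
  - destruct (DAle_total a b); [exists (Some a) | exists (Some b)];
      simpl; intros; da_order.
  - exists (Some a); simpl; tauto.
  - exists (Some b); simpl; tauto.
  - exists None; simpl; tauto.
Qed.

Lemma DAopen_ext (U V : DA -> Prop) :
  (forall x, U x <-> V x) -> DAopen U -> DAopen V.
Proof.
  intros HUV HU x Vx.
  destruct (HU x (proj2 (HUV x) Vx)) as [lo [hi [Hx Hsub]]].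
  exists lo, hi; split; [exact Hx | intros y Hy; apply HUV, Hsub, Hy].
Qed.

Lemma DAopen_or (U V : DA -> Prop) :
  DAopen U -> DAopen V -> DAopen (fun x => U x \/ V x).
Proof.
  intros HU HV x [Ux|Vx];
    [destruct (HU x Ux) as [lo [hi [Hx Hsub]]] | destruct (HV x Vx) as [lo [hi [Hx Hsub]]]];
    exists lo, hi; split; auto.
Qed.

Lemma DAopen_and (U V : DA -> Prop) :
  DAopen U -> DAopen V -> DAopen (fun x => U x /\ V x).
Proof.
  intros HU HV x [Ux Vx].
  destruct (HU x Ux) as [lo1 [hi1 [[Hlo1 Hhi1] HsubU]]].
  destruct (HV x Vx) as [lo2 [hi2 [[Hlo2 Hhi2] HsubV]]].
  destruct (above_meet lo1 lo2) as [lo Hlo], (below_meet hi1 hi2) as [hi Hhi].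
  exists lo, hi; split.
  - split; [apply Hlo | apply Hhi]; split; assumption.
  - intros y [Hloy Hhiy].
    apply Hlo in Hloy as [Hy1 Hy2]; apply Hhi in Hhiy as [Hy3 Hy4].
    split; [apply HsubU | apply HsubV]; split; assumption.
Qed.

Lemma DAopen_lt (p : DA) : DAopen (fun z => DAlt z p).
Proof.
  intros x Hx; exists None, (Some p); split; [split; [exact I | exact Hx]|].
  intros y [_ Hy]; exact Hy.
Qed.

Lemma DAopen_gt (p : DA) : DAopen (DAlt p).
Proof.
  intros x Hx; exists (Some p), None; split; [split; [exact Hx | exact I]|].
  intros y [Hy _]; exact Hy.
Qed.

(* [<a,1>, ->) is the open ray (<a,0>, ->), or everything when a = 0. *)
Lemma DAopen_ge (p : DA) : snd (DApt p) = true -> DAopen (DAle p).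
Proof.
  intros Hp z Hz; pose proof (DApt_bounds p).
  destruct (Rlt_or_le 0 (fst (DApt p))) as [Hpos|Hzero].
  - assert (Hq : in_DA (fst (DApt p), false)) by (red; simpl; lra).
    exists (Some (exist _ _ Hq)), None; split.
    + split; [da_order | exact I].
    + intros w [Hw _]; da_order.
  - exists None, None; split; [split; exact I|].
    intros w _; da_order.
Qed.

Lemma DAopen_le (p : DA) : snd (DApt p) = false -> DAopen (fun z => DAle z p).
Proof.
  intros Hp z Hz; pose proof (DApt_bounds p).
  destruct (Rlt_or_le (fst (DApt p)) 1) as [Hlt|Hone].
  - assert (Hq : in_DA (fst (DApt p), true)) by (red; simpl; lra).
    exists None, (Some (exist _ _ Hq)); split.
    + split; [exact I | da_order].
    + intros w [_ Hw]; da_order.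
  - exists None, None; split; [split; exact I|].
    intros w _; da_order.
Qed.

Lemma clopen_interval_full : clopen_interval (fun _ => True).
Proof.
  assert (H1 : in_DA (1, false)) by (red; simpl; lra).
  split; [exists (exist _ _ H1); exact I|].
  split; [intros ? ? ? _ _ _ _; exact I|].
  split.
  - intros z _; exists None, None; split; [split; exact I | intros; exact I].
  - intros z Hz; contradiction (Hz I).
Qed.

Lemma clopen_interval_Icc (p q : DA) :
  snd (DApt p) = true -> snd (DApt q) = false -> DAle p q ->
  clopen_interval (fun z => DAle p z /\ DAle z q).
Proof.
  intros Hp Hq Hpq; split; [|split].
  - exists p; split; [apply DAle_refl | exact Hpq].
  - intros x y z [Hpx _] [_ Hzq] Hxy Hyz; split;
      [exact (DAle_trans _ _ _ Hpx Hxy) | exact (DAle_trans _ _ _ Hyz Hzq)].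
  - split; [exact (DAopen_and _ _ (DAopen_ge p Hp) (DAopen_le q Hq))|].
    apply (DAopen_ext (fun z => DAlt z p \/ DAlt q z));
      [|exact (DAopen_or _ _ (DAopen_lt p) (DAopen_gt q))].
    intros z; rewrite <- (DAnle_lt p z), <- (DAnle_lt z q); tauto.
Qed.

Lemma clopen_interval_between (x y : DA) :
  fst (DApt x) < fst (DApt y) ->
  exists J, clopen_interval J /\ forall z, J z -> DAle x z /\ DAle z y.
Proof.
  intros Hxy; pose proof (DApt_bounds x); pose proof (DApt_bounds y).
  set (a := fst (DApt x) + (fst (DApt y) - fst (DApt x)) / 3).
  set (b := fst (DApt x) + 2 * (fst (DApt y) - fst (DApt x)) / 3).
  assert (Ha : in_DA (a, true)) by (red; simpl; unfold a; lra).
  assert (Hb : in_DA (b, false)) by (red; simpl; unfold b; lra).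
  exists (fun z => DAle (exist _ _ Ha) z /\ DAle z (exist _ _ Hb)); split.
  - apply clopen_interval_Icc; [reflexivity | reflexivity | da_order; unfold a, b in *; lra].
  - intros z; da_order; unfold a, b in *; lra.
Qed.

Lemma clopen_interval_left_end (U : DA -> Prop) (x : DA) :
  DAopen U -> U x -> snd (DApt x) = false ->
  exists J, clopen_interval J /\ forall z, J z -> U z /\ DAle z x.
Proof.
  intros HU Ux Hx; destruct (HU x Ux) as [lo [hi [[Hlo Hhi] Hsub]]].
  assert (Hp : exists p, snd (DApt p) = true /\ DAle p x /\ above lo p).
  { pose proof (DApt_bounds x).
    set (l := match lo with Some w => fst (DApt w) | None => 0 end).
    assert (Hl : 0 <= l < fst (DApt x)).
    { unfold l; destruct lo as [w|]; simpl in *; da_order. }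
    assert (Hm : in_DA ((l + fst (DApt x)) / 2, true)) by (red; simpl; lra).
    exists (exist _ _ Hm); split; [reflexivity|].
    split; [da_order|]; unfold l in *; destruct lo as [w|]; simpl in *; da_order. }
  destruct Hp as [p [Hpt [Hpx Hlop]]].
  exists (fun z => DAle p z /\ DAle z x); split; [exact (clopen_interval_Icc p x Hpt Hx Hpx)|].
  intros z [Hpz Hzx]; split; [|exact Hzx].
  apply Hsub; split.
  - destruct lo as [w|]; simpl in *; da_order.
  - destruct hi as [v|]; simpl in *; da_order.
Qed.

Lemma clopen_interval_right_end (U : DA -> Prop) (y : DA) :
  DAopen U -> U y -> snd (DApt y) = true ->
  exists J, clopen_interval J /\ forall z, J z -> U z /\ DAle y z.
Proof.
  intros HU Uy Hy; destruct (HU y Uy) as [lo [hi [[Hlo Hhi] Hsub]]].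
  assert (Hq : exists q, snd (DApt q) = false /\ DAle y q /\ below hi q).
  { pose proof (DApt_bounds y).
    set (r := match hi with Some w => fst (DApt w) | None => 1 end).
    assert (Hr : fst (DApt y) < r <= 1).
    { unfold r; destruct hi as [w|]; simpl in *; da_order. }
    assert (Hm : in_DA ((fst (DApt y) + r) / 2, false)) by (red; simpl; lra).
    exists (exist _ _ Hm); split; [reflexivity|].
    split; [da_order|]; unfold r in *; destruct hi as [w|]; simpl in *; da_order. }
  destruct Hq as [q [Hqf [Hyq Hhiq]]].
  exists (fun z => DAle y z /\ DAle z q); split; [exact (clopen_interval_Icc y q Hy Hqf Hyq)|].
  intros z [Hyz Hzq]; split; [|exact Hyz].
  apply Hsub; split.
  - destruct lo as [w|]; simpl in *; da_order.
  - destruct hi as [v|]; simpl in *; da_order.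
Qed.

Lemma monotone_level_convex (J : DA -> Prop) (h : DA -> DA) (x y z : DA) :
  monotone_on J h -> J x -> J y -> J z ->
  DAle x y -> DAle y z -> h x = h z -> h y = h x.
Proof.
  intros [Hmo|Hmo] Jx Jy Jz Hxy Hyz Hxz; apply DAle_antisym.
  - rewrite Hxz; apply Hmo; assumption.
  - apply Hmo; assumption.
  - apply Hmo; assumption.
  - rewrite Hxz; apply Hmo; assumption.
Qed.

Lemma monotone_injective_strict (J : DA -> Prop) (h : DA -> DA) :
  monotone_on J h -> (forall x y, J x -> J y -> DAlt x y -> h x <> h y) ->
  strictly_monotone_on J h.
Proof.
  intros [Hmo|Hmo] Hinj; [left | right]; intros x y Jx Jy Hxy;
    (destruct (Hmo x y Jx Jy (or_introl Hxy)) as [Hlt|Heq]; [exact Hlt|]);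
    [|symmetry in Heq]; contradiction (Hinj x y Jx Jy Hxy Heq).
Qed.

Lemma constant_on_eq (J : DA -> Prop) (h : DA -> DA) (c : DA) :
  (forall z, J z -> h z = c) -> constant_on J h.
Proof. intros Hc z1 z2 J1 J2; rewrite (Hc z1 J1), (Hc z2 J2); reflexivity. Qed.

Lemma constant_clopen_interval_left_of (h : DA -> DA) (U : DA -> Prop) (x : DA) :
  DAopen (fun z => U (h z)) -> U (h x) -> snd (DApt x) = false ->
  (forall z, U (h z) -> DAle z x -> h z = h x) ->
  exists J, clopen_interval J /\ constant_on J h.
Proof.
  intros HU Ux Hx Hconst.
  destruct (clopen_interval_left_end _ x HU Ux Hx) as [J [HJ Hsub]].
  exists J; split; [exact HJ|].
  apply (constant_on_eq J h (h x)); intros z Jz.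
  destruct (Hsub z Jz); auto.
Qed.

Lemma constant_clopen_interval_right_of (h : DA -> DA) (U : DA -> Prop) (y : DA) :
  DAopen (fun z => U (h z)) -> U (h y) -> snd (DApt y) = true ->
  (forall z, U (h z) -> DAle y z -> h z = h y) ->
  exists J, clopen_interval J /\ constant_on J h.
Proof.
  intros HU Uy Hy Hconst.
  destruct (clopen_interval_right_end _ y HU Uy Hy) as [J [HJ Hsub]].
  exists J; split; [exact HJ|].
  apply (constant_on_eq J h (h y)); intros z Jz.
  destruct (Hsub z Jz); auto.
Qed.

Lemma constant_clopen_interval_of_ends (h : DA -> DA) (x y : DA) :
  monotone_on (fun _ => True) h -> DAcontinuous h ->
  snd (DApt x) = false -> snd (DApt y) = true -> h x = h y ->
  exists J, clopen_interval J /\ constant_on J h.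
Proof.
  intros Hmon Hcont Hx Hy Hxy.
  destruct (snd (DApt (h x))) eqn:Hc.
  - pose proof (Hcont _ (DAopen_ge _ Hc)) as HU; simpl in HU.
    destruct Hmon as [Hmo|Hmo].
    + apply (constant_clopen_interval_left_of h (DAle (h x)) x HU (DAle_refl _) Hx).
      intros z Uz Hzx; apply DAle_antisym; [apply Hmo | exact Uz]; trivial.
    + rewrite Hxy in HU.
      apply (constant_clopen_interval_right_of h (DAle (h y)) y HU (DAle_refl _) Hy).
      intros z Uz Hyz; apply DAle_antisym; [apply Hmo | exact Uz]; trivial.
  - pose proof (Hcont _ (DAopen_le _ Hc)) as HU; simpl in HU.
    destruct Hmon as [Hmo|Hmo].
    + rewrite Hxy in HU.
      apply (constant_clopen_interval_right_of h (fun v => DAle v (h y)) y HU (DAle_refl _) Hy).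
      intros z Uz Hyz; apply DAle_antisym; [exact Uz | apply Hmo]; trivial.
    + apply (constant_clopen_interval_left_of h (fun v => DAle v (h x)) x HU (DAle_refl _) Hx).
      intros z Uz Hzx; apply DAle_antisym; [exact Uz | apply Hmo]; trivial.
Qed.

Lemma constant_clopen_interval_of_collision (h : DA -> DA) (x y : DA) :
  monotone_on (fun _ => True) h -> DAcontinuous h ->
  DAlt x y -> h x = h y ->
  exists J, clopen_interval J /\ constant_on J h.
Proof.
  intros Hmon Hcont [Hlt|[_ [Hx Hy]]] Hxy.
  - destruct (clopen_interval_between x y Hlt) as [J [HJ Hsub]].
    exists J; split; [exact HJ|].
    apply (constant_on_eq J h (h x)); intros z Jz; destruct (Hsub z Jz) as [Hxz Hzy].
    exact (monotone_level_convex _ h x z y Hmon I I I Hxz Hzy Hxy).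
  - exact (constant_clopen_interval_of_ends h x y Hmon Hcont Hx Hy Hxy).
Qed.

Theorem proposition2p2 (h : DA -> DA) :
  monotone_on (fun _ => True) h -> DAcontinuous h ->
  exists J : DA -> Prop, clopen_interval J /\
    (constant_on J h \/ strictly_monotone_on J h).
Proof.
  intros Hmon Hcont.
  destruct (classic (exists x y, DAlt x y /\ h x = h y)) as [[x [y [Hxy Heq]]]|Hinj].
  - destruct (constant_clopen_interval_of_collision h x y Hmon Hcont Hxy Heq) as [J [HJ Hc]].
    exists J; split; [exact HJ | left; exact Hc].
  - exists (fun _ => True); split; [exact clopen_interval_full|].
    right; apply (monotone_injective_strict _ h Hmon).
    intros x y _ _ Hxy Heq; apply Hinj; exists x, y; split; assumption.
Qed.
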